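(* Let $\mathcal{M}=\langle M,\circ,e\rangle$ be an mge monoid. Then $\mathcal{M}$ has left cancellation (for all $a,b,c\in M$, $ca=cb$ implies $a=b$), and for every $m\in M$ the pair $\langle e,e\rangle$ is an mge of $\langle m,m\rangle$.
   Context: In a monoid $\langle M,\circ,e\rangle$, a tuple $\langle m_1,\dots,m_n\rangle\in M^n$ is equalizable if there is $\langle x_1,\dots,x_n\rangle\in M^n$ (an equalizer) with $m_1x_1=\dots=m_nx_n$; an equalizer is a most general equalizer (mge) if every equalizer has the form $\langle x_1x,\dots,x_nx\rangle$ for some $x\in M$. An mge monoid is a monoid with right cancellation ($ac=bc\Rightarrow a=b$) in which every equalizable pair has an mge. *)

Record monoid := Monoid {
  carrier :> Type;
  op : carrier -> carrier -> carrier;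
  unit : carrier;
  op_assoc : forall a b c, op a (op b c) = op (op a b) c;
  op_unit_l : forall a, op unit a = a;
  op_unit_r : forall a, op a unit = a
}.

Section Defs.
Variable M : monoid.
Local Notation "a * b" := (@op M a b).

Definition equalizer2 (m1 m2 x1 x2 : M) : Prop := m1 * x1 = m2 * x2.

Definition equalizable2 (m1 m2 : M) : Prop :=
  exists x1 x2, equalizer2 m1 m2 x1 x2.

Definition mge2 (m1 m2 x1 x2 : M) : Prop :=
  equalizer2 m1 m2 x1 x2 /\
  forall y1 y2, equalizer2 m1 m2 y1 y2 ->
    exists x, y1 = x1 * x /\ y2 = x2 * x.

Definition right_cancellative : Prop :=
  forall a b c : M, a * c = b * c -> a = b.

Definition left_cancellative : Prop :=
  forall a b c : M, c * a = c * b -> a = b.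

Definition mge_monoid : Prop :=
  right_cancellative /\
  forall m1 m2 : M, equalizable2 m1 m2 -> exists x1 x2, mge2 m1 m2 x1 x2.
End Defs.


(* Since <e,e> equalizes <m,m>, any mge <x1,x2> of <m,m> satisfies
   e = x1 x = x2 x for some x, so right cancellation forces x1 = x2; then
   every equalizer <a,b> of <m,m> factors as <x1 y, x1 y>, i.e. a = b.
   Conversely, with left cancellation the equalizers of <m,m> are exactly
   the diagonal pairs <y,y> = <e y, e y>. *)

Section MgeDiagonal.
Variable M : monoid.

Lemma equalizer2_diag (m y : M) : equalizer2 M m m y y.
Proof. reflexivity. Qed.

Lemma mge2_diag_eq (m x1 x2 : M) :
  right_cancellative M -> mge2 M m m x1 x2 -> x1 = x2.
Proof.
  intros Hr [_ Hgen].
  destruct (Hgen (unit M) (unit M) (equalizer2_diag m (unit M))) as [x [H1 H2]].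
  apply (Hr _ _ x).
  rewrite <- H1; exact H2.
Qed.

Lemma mge_monoid_left_cancellative : mge_monoid M -> left_cancellative M.
Proof.
  intros [Hr Hmge] a b c Hab.
  destruct (Hmge c c) as [x1 [x2 Hx]].
  { exists (unit M), (unit M); apply equalizer2_diag. }
  assert (Hx12 : x1 = x2) by exact (mge2_diag_eq c x1 x2 Hr Hx).
  destruct Hx as [_ Hgen].
  destruct (Hgen a b Hab) as [y [Ha Hb]].
  rewrite Ha, Hb, Hx12; reflexivity.
Qed.

Lemma left_cancellative_mge2_unit (m : M) :
  left_cancellative M -> mge2 M m m (unit M) (unit M).
Proof.
  intros Hl; split; [apply equalizer2_diag |].
  intros y1 y2 Hy.
  apply Hl in Hy; subst y1.
  exists y2; rewrite op_unit_l; split; reflexivity.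
Qed.

End MgeDiagonal.

Theorem lemma2 (M : monoid) :
  mge_monoid M ->
  left_cancellative M /\ (forall m : M, mge2 M m m (@unit M) (@unit M)).
Proof.
  intros Hmge.
  assert (Hl : left_cancellative M) by exact (mge_monoid_left_cancellative M Hmge).
  split; [exact Hl |].
  intros m; exact (left_cancellative_mge2_unit M m Hl).
Qed.
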